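(* Consider the noisy search problem in the context, and suppose every query is a discrete interval, $S_n\in\mathcal{I}$ for $n=1,\dots,t$, with uniform prior $\pi_i(0)=\delta$. Then the posterior $\pi(t)$ is piecewise constant on at most $2t+1$ intervals: there exist $k\le 2t+1$ pairwise disjoint sets $J_1,\dots,J_k\in\mathcal{I}$ with $\bigcup_u J_u=\{1,\dots,1/\delta\}$ such that $$\pi_i(t)=\sum_{u=1}^{k}\frac{\pi_{J_u}(t)}{|J_u|}\mathbb{1}_{J_u}(i)\quad\text{for all } i.$$
   Context: Search problem: fix $\delta\in(0,1)$ with $N=1/\delta$ an integer. A target index $\theta$ is uniform on $\{1,\dots,N\}$. A noise profile $p:(0,1)\to(0,1/2)$ is continuous and non-decreasing. At each time $n$ a query set $S_n\subseteq\{1,\dots,N\}$ is chosen as a function of past queries/observations and one observes $Y_n=\mathbb{1}(\theta\in S_n)\oplus Z_n$, where conditionally on $S_n$, $Z_n\sim\mathrm{Bern}(p(\delta|S_n|))$, conditionally i.i.d. across time. The posterior is $\pi_i(t)=\mathbb{P}(\theta=i\mid S_1^t,Y_1^t)$, and $\pi_S=\sum_{i\in S}\pi_i$. $\mathcal{I}=\{\{i:a\le i\le b\}:1\le a\le b\le N\}$ is the collection of discrete intervals. *)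

From HB Require Import structures.
From mathcomp Require Import all_boot all_order all_algebra.
From mathcomp Require Import all_classical all_reals all_analysis.
Set Implicit Arguments. Unset Strict Implicit. Unset Printing Implicit Defensive.
Import Order.TTheory GRing.Theory Num.Theory.
Local Open Scope ring_scope.

(* Indices 1..N are represented by ordinals 'I_N = {0,..,N-1} (shift by one). *)

Definition is_dinterval (N : nat) (J : {set 'I_N}) : Prop :=
  exists a b : nat, (a <= b)%N /\ (b < N)%N /\ J = [set i : 'I_N | (a <= i <= b)%N].

(* A deterministic adaptive policy: the query at time n+1 is a function of the
   past observations Y_1..Y_n (past queries are themselves determined by them). *)
Definition policy (N : nat) := seq bool -> {set 'I_N}.

Section Search.
Variables (R : realType) (N : nat) (delta : R) (p : R -> R).

(* P(Y = b | theta = i, S) where Y = 1(theta in S) xor Z, Z ~ Bern(p(delta |S|)) *)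
Definition lik (S : {set 'I_N}) (b : bool) (i : 'I_N) : R :=
  let q := p (delta * #|S|%:R) in
  if (i \in S) == b then 1 - q else q.

(* joint probability P(theta = i, Y_1^t = y), t = size y, uniform prior delta *)
Definition joint (pol : policy N) (y : seq bool) (i : 'I_N) : R :=
  delta * \prod_(n < size y) lik (pol (take n y)) (nth false y n) i.

Definition posterior (pol : policy N) (y : seq bool) (i : 'I_N) : R :=
  joint pol y i / \sum_(j : 'I_N) joint pol y j.

Definition post_mass (pol : policy N) (y : seq bool) (S : {set 'I_N}) : R :=
  \sum_(i in S) posterior pol y i.

End Search.

From HB Require Import structures.
From mathcomp Require Import all_boot all_order all_algebra.
From mathcomp Require Import all_classical all_reals all_analysis.
From mathcomp Require Import zify.
Import Order.TTheory GRing.Theory Num.Theory.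
Import numFieldNormedType.Exports.

(* The likelihood of [theta = i] depends on [i] only through its membership
   pattern [(i \in S_n)_n].  An interval indicator changes value at most twice
   along [0, ..., N-1], so the posterior profile changes value at most [2t]
   times.  Its maximal constant runs are at most [2t+1] intervals, and on each
   of them the posterior coincides with its average [pi_J / |J|]. *)

Section Changes.
Context {T : eqType} (h : nat -> T).

Definition changes (n : nat) : nat := \sum_(j < n) (h j.+1 != h j).

Lemma changes0 : changes 0 = 0.
Proof. by rewrite /changes big_ord0. Qed.

Lemma changesS n : changes n.+1 = changes n + (h n.+1 != h n).
Proof. by rewrite /changes big_ord_recr. Qed.

Lemma changes_leS n : changes n.+1 <= (changes n).+1.
Proof. by rewrite changesS; case: (_ != _); rewrite ?addn0 ?addn1. Qed.

Lemma leq_changes m n : m <= n -> changes m <= changes n.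
Proof.
rewrite /changes -!(big_mkord xpredT (fun j => nat_of_bool (h j.+1 != h j))).
by move=> mn; rewrite (big_cat_nat (leq0n m) mn) leq_addr.
Qed.

Lemma changes_eq_const_le {m n} : m <= n -> changes n = changes m -> h n = h m.
Proof.
move/subnKC <-; elim: (n - m) => [|d IH]; first by rewrite addn0.
have := leq_changes _ _ (leq_addr d m); rewrite addnS changesS.
by case: eqP => [-> _|_]; [rewrite addn0; apply: IH | lia].
Qed.

Lemma changes_eq_const m n : changes m = changes n -> h m = h n.
Proof.
wlog le_mn : m n / m <= n => [wlog_le|].
  by case: (leqP m n) => [/wlog_le//|/ltnW le_nm /esym/(wlog_le _ _ le_nm)->].
by move=> /esym /(changes_eq_const_le le_mn) ->.
Qed.

Lemma changes_surj {n u} : u <= changes n -> exists2 i, i <= n & changes i = u.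
Proof.
elim: n => [|n IH].
  by rewrite changes0 leqn0 => /eqP->; exists 0; rewrite ?changes0.
move=> le_u; case: (leqP u (changes n)) => [/IH[i le_i <-]|lt_u].
  by exists i; first exact: leqW.
exists n.+1 => //; apply/eqP; rewrite eqn_leq le_u andbT.
exact: leq_trans (changes_leS n) lt_u.
Qed.

End Changes.

Lemma eq_changes (T : eqType) (h h' : nat -> T) n :
  (forall j, j <= n -> h j = h' j) -> changes h n = changes h' n.
Proof.
by move=> eq_h; apply: eq_bigr => j _; rewrite !eq_h // ltnW.
Qed.

Lemma changes_le_sum (T I : eqType) (h : nat -> T) m (g : 'I_m -> nat -> I) n :
  (forall j, (forall k, g k j.+1 = g k j) -> h j.+1 = h j) ->
  changes h n <= \sum_(k < m) changes (g k) n.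
Proof.
move=> h_det; rewrite /changes exchange_big leq_sum // => j _.
case: eqP => //= ne_h; rewrite lt0n sum_nat_eq0; apply/negP => /forallP g_const.
by apply: ne_h; apply: h_det => k; have /= := g_const k; case: (g k j.+1 =P g k j).
Qed.

Lemma changes_nat_interval a b n : a <= b ->
  changes (fun j => a <= j <= b) n = (0 < a <= n) + (b < n).
Proof.
move=> le_ab; elim: n => [|n IH]; first by rewrite changes0; case: a {le_ab}.
rewrite changesS IH.
case: (ltngtP a n.+1); case: (ltngtP b n); case: (ltngtP 0 a) => /= *; lia.
Qed.

Lemma dinterval_convex N (J : {set 'I_N}) (i0 : 'I_N) :
  i0 \in J -> (forall x z w : 'I_N, x <= z <= w -> x \in J -> w \in J -> z \in J) ->
  is_dinterval J.
Proof.
move=> J_i0 convJ.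
case: (arg_minnP (@nat_of_ord N) J_i0) => a J_a min_a.
case: (arg_maxnP (@nat_of_ord N) J_i0) => b J_b max_b.
exists a, b; split; first exact: min_a.
split; first exact: ltn_ord.
apply/setP => x; rewrite inE; apply/idP/idP => [J_x|le_axb].
  by rewrite (min_a x J_x) (max_b x J_x : x <= b).
exact: convJ le_axb J_a J_b.
Qed.

Lemma changes_fibre_dinterval (T : eqType) (h : nat -> T) N u : u <= changes h N ->
  is_dinterval [set x : 'I_N.+1 | changes h x == u].
Proof.
move=> le_u; have [i le_i eq_u] := changes_surj h le_u.
apply: (@dinterval_convex _ _ (inord i)); first by rewrite inE inordK ?eq_u.
move=> x z w /andP[le_xz le_zw]; rewrite !inE => /eqP <- /eqP eq_w.
by rewrite eqn_leq -{1}eq_w !leq_changes.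
Qed.

Local Open Scope ring_scope.

Section Fibres.
Context {T : finType} {k : nat} (c : T -> 'I_k).

Definition fibre (u : 'I_k) : {set T} := [set x | c x == u].

Lemma fibres_disjoint u v : u != v -> [disjoint fibre u & fibre v].
Proof.
move=> ne_uv; apply/pred0P => x /=; rewrite !inE.
by apply/negP => /andP[/eqP-> /eqP eq_v]; rewrite eq_v eqxx in ne_uv.
Qed.

Lemma bigcup_fibres : \bigcup_(u < k) fibre u = [set: T].
Proof. by apply/setP => x; rewrite inE; apply/bigcupP; exists (c x); rewrite ?inE. Qed.

Lemma fibre_average (R : numFieldType) (g : T -> R) :
  (forall x z, c x = c z -> g x = g z) -> forall i,
  g i = \sum_(u < k) (\sum_(x in fibre u) g x) / #|fibre u|%:R
                    * (if i \in fibre u then 1 else 0).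
Proof.
move=> g_fibre i; have fibre_i : i \in fibre (c i) by rewrite inE.
rewrite (bigD1 (c i)) //= fibre_i mulr1 [X in _ + X]big1 => [|u ne_u]; last first.
  by rewrite inE eq_sym (negbTE ne_u) mulr0.
rewrite addr0 (eq_bigr (fun=> g i)) => [|x]; last first.
  by rewrite inE => /eqP /g_fibre.
rewrite sumr_const -[g i *+ _]mulr_natr mulfK // pnatr_eq0 -lt0n.
by apply/card_gt0P; exists i.
Qed.

End Fibres.

Section Posterior.
Variables (R : realType) (N : nat) (delta : R) (p : R -> R).
Variables (pol : policy N) (y : seq bool).

Lemma joint_eq_membership i j :
  (forall n, (n < size y)%N -> (i \in pol (take n y)) = (j \in pol (take n y))) ->
  joint delta p pol y i = joint delta p pol y j.
Proof.
by move=> eq_mem; congr (_ * _); apply: eq_bigr => n _; rewrite /lik eq_mem.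
Qed.

Lemma posterior_eq_membership i j :
  (forall n, (n < size y)%N -> (i \in pol (take n y)) = (j \in pol (take n y))) ->
  posterior delta p pol y i = posterior delta p pol y j.
Proof. by move=> /joint_eq_membership eq_joint; rewrite /posterior eq_joint. Qed.

End Posterior.

Lemma changes_posterior_le (R : realType) N (delta : R) (p : R -> R)
    (pol : policy N.+1) (y : seq bool) :
  (forall n, (n < size y)%N -> is_dinterval (pol (take n y))) ->
  (changes (fun j => posterior delta p pol y (inord j : 'I_N.+1)) N <= (size y).*2)%N.
Proof.
move=> interval_queries.
pose mem_n (n : 'I_(size y)) j := (inord j : 'I_N.+1) \in pol (take n y).
apply: leq_trans (@changes_le_sum _ _ _ _ mem_n N _) _.
  move=> j same; apply: posterior_eq_membership => n lt_n.
  exact: (same (Ordinal lt_n)).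
rewrite -muln2 -[X in (_ <= X * 2)%N]card_ord -sum_nat_const; apply: leq_sum => n _.
have [a [b [le_ab [_ pol_n]]]] := interval_queries n (ltn_ord n).
rewrite (@eq_changes _ _ (fun j => a <= j <= b)%N) => [|j le_j]; last first.
  by rewrite /mem_n pol_n inE inordK.
by rewrite changes_nat_interval //; case: (_ && _); case: (_ < _)%N.
Qed.

Theorem lemma1 (R : realType) (N : nat) (delta : R) (p : R -> R)
  (hN : (0 < N)%N) (hdelta : delta = (N%:R)^-1)
  (hp_cont : {within `]0, 1[%classic, continuous p}%classic)
  (hp_mono : forall x y : R, 0 < x < 1 -> 0 < y < 1 -> x <= y -> p x <= p y)
  (hp_range : forall x : R, 0 < x < 1 -> 0 < p x < 2^-1)
  (pol : policy N) (y : seq bool)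
  (hint : forall n : nat, (n < size y)%N -> is_dinterval (pol (take n y))) :
  exists (k : nat) (J : 'I_k -> {set 'I_N}),
    (k <= (size y).*2.+1)%N /\
    (forall u, is_dinterval (J u)) /\
    (forall u v, u != v -> [disjoint J u & J v]) /\
    (\bigcup_(u < k) J u = [set: 'I_N]) /\
    (forall i : 'I_N,
        posterior delta p pol y i =
        \sum_(u < k) post_mass delta p pol y (J u) / (#|J u|%:R)
                     * (if i \in J u then 1 else 0)).
Proof.
destruct N as [|N]; first by [].
pose prof j := posterior delta p pol y (inord j : 'I_N.+1).
pose m := changes prof N.
pose c (x : 'I_N.+1) : 'I_m.+1 :=
  Ordinal (leq_changes prof _ _ (leq_ord x) : changes prof x < m.+1)%N.
have fibre_c u : fibre c u = [set x : 'I_N.+1 | changes prof x == u].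
  by apply/setP => x; rewrite !inE.
have c_posterior x z : c x = c z -> posterior delta p pol y x = posterior delta p pol y z.
  by move=> /(congr1 val) /changes_eq_const; rewrite /prof !inord_val.
exists m.+1, (fibre c); split.
  by rewrite ltnS; exact: changes_posterior_le.
split; first by move=> u; rewrite fibre_c; apply: changes_fibre_dinterval; rewrite -ltnS.
split; first exact: fibres_disjoint.
split; first exact: bigcup_fibres.
exact: fibre_average c_posterior.
Qed.
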